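(* Let $G$ be a discrete group that contains an amenable normalish subgroup. Then for every coefficient $G$-module $(\pi,E)$ with $E$ mixing and every $n\ge 0$, the bounded cohomology group $H_b^n(G,E)$ is trivial.
   Context: A subgroup $H<G$ is normalish if for every $n\ge1$ and $t_1,\dots,t_n\in G$ the intersection $\bigcap_i t_iHt_i^{-1}$ is infinite. A coefficient $G$-module $(\pi,E)$ is an isometric linear representation $\pi$ of $G$ on a Banach space $E$ which is the dual of a separable Banach space, such that each $\pi(s)$ is weak*-continuous. $E$ is mixing if for every $x\in E\setminus\{0\}$ the stabilizer $\{s\in G:\pi(s)x=x\}$ is finite. The bounded cohomology $H_b^n(G,E)$ is the $n$-th cohomology of the complex $0\to\ell^\infty(G,E)^G\to\ell^\infty(G^2,E)^G\to\cdots$ of bounded $G$-equivariant functions with the standard homogeneous coboundary maps. *)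

From HB Require Import structures.
From mathcomp Require Import all_boot all_order all_algebra.
From mathcomp Require Import all_classical all_reals all_analysis.
Set Implicit Arguments. Unset Strict Implicit. Unset Printing Implicit Defensive.
Import Order.TTheory GRing.Theory Num.Theory.
Import numFieldNormedType.Exports.
Local Open Scope classical_set_scope.
Local Open Scope ring_scope.

Definition is_group (G : Type) (mul : G -> G -> G) (inv : G -> G) (one : G) : Prop :=
  [/\ (forall x y z, mul x (mul y z) = mul (mul x y) z),
      (forall x, mul one x = x), (forall x, mul x one = x),
      (forall x, mul (inv x) x = one) & (forall x, mul x (inv x) = one)].

Definition is_subgroup (G : Type) (mul : G -> G -> G) (inv : G -> G) (one : G)
  (H : set G) : Prop :=
  [/\ H one, (forall x y, H x -> H y -> H (mul x y)) & (forall x, H x -> H (inv x))].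

(** Normalish: every finite intersection (n >= 1 conjugates) of conjugates
    t_i H t_i^{-1} is infinite.  x \in t H t^{-1}  <->  t^{-1} x t \in H. *)
Definition normalish (G : Type) (mul : G -> G -> G) (inv : G -> G) (H : set G) : Prop :=
  forall (n : nat) (t : 'I_n.+1 -> G),
    infinite_set [set x | forall i, H (mul (mul (inv (t i)) x) (t i))].

(** Elements of l^oo(H) are represented by functions G -> R
    bounded on H, two such functions being identified when they agree on H. *)
Definition bounded_on (R : realType) (G : Type) (H : set G) (phi : G -> R) : Prop :=
  exists M : R, forall x, H x -> `|phi x| <= M.

Definition amenable_subgroup (R : realType) (G : Type) (mul : G -> G -> G)
  (H : set G) : Prop :=
  exists m : (G -> R) -> R,
    [/\ (forall phi psi, (forall x, H x -> phi x = psi x) -> m phi = m psi),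
        (forall (a : R) phi psi, bounded_on H phi -> bounded_on H psi ->
            m (fun x => a * phi x + psi x) = a * m phi + m psi),
        (forall phi, bounded_on H phi -> (forall x, H x -> 0 <= phi x) -> 0 <= m phi),
        m (fun _ => 1) = 1 &
        (forall h phi, H h -> bounded_on H phi -> m (fun x => phi (mul h x)) = m phi)].

Definition separable (R : realType) (F : normedModType R) : Prop :=
  exists D : set F, countable D /\ closure D = setT.

(** [p] identifies E isometrically and linearly with the continuous dual F^* of F:
    x |-> p x . is linear, isometric (operator norm) and onto F^*. *)
Definition dual_pairing (R : realType) (E F : normedModType R) (p : E -> F -> R) : Prop :=
  [/\ (forall x (a : R) f g, p x (a *: f + g) = a * p x f + p x g),
      (forall (a : R) x y f, p (a *: x + y) f = a * p x f + p y f),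
      (forall x f, `|p x f| <= `|x| * `|f|),
      (forall x (e : R), 0 < e -> exists f, `|f| <= 1 /\ `|x| - e < `|p x f|) &
      (forall phi : F -> R,
         (forall (a : R) f g, phi (a *: f + g) = a * phi f + phi g) ->
         (exists M : R, forall f, `|phi f| <= M * `|f|) ->
         exists x, forall f, p x f = phi f)].

Definition wstar_open (R : realType) (E F : normedModType R) (p : E -> F -> R)
  (U : set E) : Prop :=
  forall x, U x -> exists (S : seq F) (e : R), 0 < e /\
    (forall y, (forall f, f \in S -> `|p (y - x) f| < e) -> U y).

Definition wstar_continuous (R : realType) (E F : normedModType R) (p : E -> F -> R)
  (T : E -> E) : Prop :=
  forall U, wstar_open p U -> wstar_open p (T @^-1` U).

Definition wstar_continuous_rep (R : realType) (G : Type) (E F : normedModType R)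
  (p : E -> F -> R) (pi : G -> E -> E) : Prop :=
  forall s, wstar_continuous p (pi s).

Definition coefficient_module (R : realType) (G : Type) (mul : G -> G -> G) (one : G)
  (E F : normedModType R) (p : E -> F -> R) (pi : G -> E -> E) : Prop :=
  separable F /\ dual_pairing p /\
  wstar_continuous_rep p pi /\
  (forall s (a : R) x y, pi s (a *: x + y) = a *: pi s x + pi s y) /\
  (forall s x, `|pi s x| = `|x|) /\
  (forall x, pi one x = x) /\
  (forall s t x, pi (mul s t) x = pi s (pi t x)).

Definition mixing (R : realType) (G : Type) (E : normedModType R) (pi : G -> E -> E) : Prop :=
  forall x : E, x != 0 -> finite_set [set s | pi s x = x].

Definition bounded_cochain (R : realType) (G : Type) (E : normedModType R) (n : nat)
  (c : ('I_n -> G) -> E) : Prop :=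
  exists M : R, forall g, `|c g| <= M.

Definition equivariant (G : Type) (E : Type) (mul : G -> G -> G) (pi : G -> E -> E)
  (n : nat) (c : ('I_n -> G) -> E) : Prop :=
  forall s g, c (fun i => mul s (g i)) = pi s (c g).

Definition coboundary (R : realType) (G : Type) (E : normedModType R) (n : nat)
  (c : ('I_n.+1 -> G) -> E) : ('I_n.+2 -> G) -> E :=
  fun g => \sum_(i < n.+2) ((-1 : R) ^+ i) *: c (fun j => g (lift i j)).

(** H_b^n(G,E) = 0: every bounded equivariant n-cocycle (a function on G^{n+1})
    is the coboundary of a bounded equivariant (n-1)-cochain (for n = 0: is zero). *)
Definition Hb_trivial (R : realType) (G : Type) (mul : G -> G -> G)
  (E : normedModType R) (pi : G -> E -> E) (n : nat) : Prop :=
  forall c : ('I_n.+1 -> G) -> E,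
    bounded_cochain c -> equivariant mul pi c -> coboundary c = (fun _ => 0) ->
    match n return ((('I_n.+1 -> G) -> E) -> Prop) with
    | 0 => fun c => c = (fun _ => 0)
    | m.+1 => fun c => exists b : ('I_m.+1 -> G) -> E,
        [/\ bounded_cochain b, equivariant mul pi b & coboundary b = c]
    end c.

From HB Require Import structures.
From mathcomp Require Import all_boot all_order all_algebra.
From mathcomp Require Import all_classical all_reals all_analysis.
From mathcomp Require Import ring lra zify.
Import Order.TTheory GRing.Theory Num.Theory.
Import numFieldNormedType.Exports.
Local Open Scope classical_set_scope.
Local Open Scope ring_scope.
Set Implicit Arguments. Unset Strict Implicit. Unset Printing Implicit Defensive.

(* Averaging over the amenable subgroup H turns a bounded function G -> E into a
   vector of E: the mean is defined weak-* through the predual F, and it commutes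
   with each pi s because a weak-*-continuous pi s has a preadjoint on F.
   Averaging a cochain over products of cosets,
     coset_mean [x_1; ...; x_k] c = mean over h_i in H of c (x_1 h_1, ..., x_k h_k),
   is chain homotopic to the identity through a homotopy built from the same means,
   and both operations preserve boundedness and equivariance.  For a bounded
   equivariant c, the average over x_1 H x ... x x_(n+1) H is fixed by every s in
   the intersection of the x_i H x_i^-1, since s only moves each x_i inside x_i H.
   This intersection is infinite because H is normalish, so by mixing the average
   vanishes, and every bounded equivariant cocycle is the coboundary of its image
   under the homotopy. *)

Section LinearMaps.
Variables (R : pzRingType) (U W : lmodType R) (f : U -> W).
Hypothesis f_linear : linear f.

Let lf : {linear U -> W} := HB.pack f (GRing.isLinear.Build _ _ _ _ f f_linear).

Lemma linear_map0 : f 0 = 0. Proof. exact: (linear0 lf). Qed.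
Lemma linear_mapB x y : f (x - y) = f x - f y. Proof. exact: (linearB lf). Qed.
Lemma linear_mapD x y : f (x + y) = f x + f y. Proof. exact: (linearD lf). Qed.
Lemma linear_mapN x : f (- x) = - f x. Proof. exact: (linearN lf). Qed.
Lemma linear_mapZ a x : f (a *: x) = a *: f x. Proof. exact: (linearZZ lf). Qed.

End LinearMaps.

Section Bilinear.
Variables (R : realType) (E F : normedModType R) (p : E -> F -> R).
Hypothesis p_linl : forall f, linear (p^~ f : E -> R^o).
Hypothesis p_linr : forall x, linear (p x : F -> R^o).

Lemma pairing_functional_repr (S : seq F) (L : E -> R) : linear (L : E -> R^o) ->
  (forall y, (forall g, g \in S -> p y g = 0) -> L y = 0) ->
  exists f, forall y, L y = p y f.
Proof.
elim: S L => [|g S IH] L L_lin L_ker.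
  by exists 0 => y; rewrite L_ker // (linear_map0 (p_linr y)).
have [[y0 [y0_S y0_g]] | no_y0] :=
  pselect (exists y0, (forall g', g' \in S -> p y0 g' = 0) /\ p y0 g != 0); last first.
  apply: IH => // y y_S; apply: L_ker => g'; rewrite inE => /orP[/eqP -> | /y_S //].
  by apply: contrapT => /eqP y_g; apply: no_y0; exists y.
pose c := L y0 / p y0 g.
pose L' y := L y - c * p y g.
have L'_lin : linear (L' : E -> R^o).
  move=> a x y; rewrite /L' /= (linear_mapD L_lin) (linear_mapZ L_lin).
  by rewrite (linear_mapD (p_linl g)) (linear_mapZ (p_linl g)) /GRing.scale /=; ring.
have [f L'_f] : exists f, forall y, L' y = p y f.
  apply: IH => // y y_S.
  (* [y] minus the right multiple of [y0] lies in the common kernel of [g :: S]. *)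
  pose y' := y - (p y g / p y0 g) *: y0.
  have pB g' : p y' g' = p y g' - p y g / p y0 g * p y0 g'.
    by rewrite (linear_mapB (p_linl g')) (linear_mapZ (p_linl g')).
  have : L y' = 0.
    apply: L_ker => g'; rewrite inE pB => /orP[/eqP -> | g'_S].
      by rewrite mulfVK // subrr.
    by rewrite (y_S g') // (y0_S g') // mulr0 subrr.
  rewrite (linear_mapB L_lin) (linear_mapZ L_lin) /GRing.scale /= /L' /c => /eqP.
  by rewrite subr_eq0 => /eqP ->; ring.
exists (c *: g + f) => y.
by rewrite (linear_mapD (p_linr y)) (linear_mapZ (p_linr y)) -L'_f /L' /GRing.scale /=; ring.
Qed.

Lemma wstar_continuous_preadjoint (T : E -> E) : linear T -> wstar_continuous p T ->
  forall f, exists f', forall y, p (T y) f = p y f'.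
Proof.
move=> T_lin T_cont f.
have U_open : wstar_open p [set y | `|p y f| < 1].
  move=> x /= x_U; exists [:: f], (1 - `|p x f|); split; first by rewrite subr_gt0.
  move=> y /(_ f (mem_head _ _)); rewrite (linear_mapB (p_linl f)) => yx_f.
  by have := ler_normD (p y f - p x f) (p x f); rewrite subrK; lra.
have /= := T_cont _ U_open 0.
rewrite (linear_map0 T_lin) (linear_map0 (p_linl f)) normr0 => /(_ ltr01) [S [e [e_gt0 S_U]]].
apply: (pairing_functional_repr (S := S)) => [a x y | y y_S].
  by rewrite /= (linear_mapD T_lin) (linear_mapZ T_lin) (p_linl f).
(* The weak-* neighbourhood of 0 contains the line through [y], and a linear
   functional bounded by 1 on a line vanishes on it. *)
apply: contrapT => /eqP Ty_f.
suff : `|p (T ((p (T y) f)^-1 *: y)) f| < 1.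
  by rewrite (linear_mapZ T_lin) (linear_mapZ (p_linl f)) /GRing.scale /= mulVf // normr1 ltxx.
apply: S_U => g g_S.
by rewrite subr0 (linear_mapZ (p_linl g)) /GRing.scale /= y_S // mulr0 normr0.
Qed.

End Bilinear.

(* [amenable_subgroup R mul H] unfolds to [exists m, invariant_mean mul H m]. *)
Definition invariant_mean (R : realType) (G : Type) (mul : G -> G -> G) (H : set G)
    (m : (G -> R) -> R) : Prop :=
  [/\ (forall phi psi, (forall x, H x -> phi x = psi x) -> m phi = m psi),
      (forall (a : R) phi psi, bounded_on H phi -> bounded_on H psi ->
          m (fun x => a * phi x + psi x) = a * m phi + m psi),
      (forall phi, bounded_on H phi -> (forall x, H x -> 0 <= phi x) -> 0 <= m phi),
      m (fun _ => 1) = 1 &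
      (forall h phi, H h -> bounded_on H phi -> m (fun x => phi (mul h x)) = m phi)].

Section Mean.
Variables (R : realType) (G : Type) (mul : G -> G -> G) (H : set G) (m : (G -> R) -> R).
Hypothesis m_mean : invariant_mean mul H m.

Lemma bounded_on_cst (c : R) : bounded_on H (fun _ => c).
Proof. by exists `|c|. Qed.

Lemma bounded_on_lin (a : R) phi psi : bounded_on H phi -> bounded_on H psi ->
  bounded_on H (fun x => a * phi x + psi x).
Proof.
move=> [K1 phi_K1] [K2 psi_K2]; exists (`|a| * K1 + K2) => x Hx.
by rewrite (le_trans (ler_normD _ _)) // normrM lerD ?ler_wpM2l ?phi_K1 ?psi_K2.
Qed.

Lemma mean_linear (a : R) phi psi : bounded_on H phi -> bounded_on H psi ->
  m (fun x => a * phi x + psi x) = a * m phi + m psi.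
Proof. by case: m_mean => _ m_lin *; apply: m_lin. Qed.

Lemma mean_translate h phi : H h -> bounded_on H phi -> m (fun x => phi (mul h x)) = m phi.
Proof. by case: m_mean => _ _ _ _ m_inv; apply: m_inv. Qed.

Lemma mean_cst (c : R) : m (fun _ => c) = c.
Proof.
have m0 : m (fun _ => 0) = 0.
  have := mean_linear 1 (bounded_on_cst 0) (bounded_on_cst 0).
  by rewrite mul1r addr0 mul1r => m00; apply: (addrI (m (fun _ => 0))); rewrite addr0 -m00.
have := mean_linear c (bounded_on_cst 1) (bounded_on_cst 0).
by case: m_mean => _ _ _ m1 _; rewrite mulr1 addr0 m1 m0 mulr1 addr0.
Qed.

Lemma mean_le phi psi : bounded_on H phi -> bounded_on H psi ->
  (forall x, H x -> phi x <= psi x) -> m phi <= m psi.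
Proof.
move=> phi_bd psi_bd phi_psi; rewrite -subr_ge0 addrC -mulN1r -mean_linear //.
case: m_mean => _ _ m_ge0 _ _; apply: m_ge0; first exact: bounded_on_lin.
by move=> x Hx; rewrite mulN1r addrC subr_ge0 phi_psi.
Qed.

Lemma mean_norm_le phi B : bounded_on H phi -> (forall x, H x -> `|phi x| <= B) -> `|m phi| <= B.
Proof.
move=> phi_bd phi_B; rewrite ler_norml; apply/andP; split.
- rewrite -(mean_cst (- B)); apply: mean_le => // [|x /phi_B]; first exact: bounded_on_cst.
  by rewrite ler_norml => /andP[].
- rewrite -(mean_cst B); apply: mean_le => // [|x /phi_B]; first exact: bounded_on_cst.
  by rewrite ler_norml => /andP[].
Qed.

End Mean.

(* Cochains are functions on all finite sequences, so that a slice [c (x :: _)] is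
   again a cochain; only the sequences of the relevant length matter. *)
Section SeqCochains.
Variables (R : realType) (G : Type) (E : normedModType R).
Implicit Types (c : seq G -> E) (s t u : seq G).

Definition slice c (x : G) : seq G -> E := fun t => c (x :: t).

Definition rem_nth (i : nat) s : seq G := take i s ++ drop i.+1 s.

Definition coboundary_seq c s : E :=
  \sum_(0 <= i < size s) ((-1 : R) ^+ i) *: c (rem_nth i s).

Definition cbounded (k : nat) (K : R) c := forall u, size u = k -> `|c u| <= K.

Lemma size_rem_nth i s : (i < size s)%N -> size (rem_nth i s) = (size s).-1.
Proof. by move=> i_lt; rewrite size_cat size_take size_drop i_lt; lia. Qed.

Lemma nth_rem_nth x0 n s (i : 'I_n.+2) (j : 'I_n.+1) :
  size s = n.+2 -> nth x0 (rem_nth i s) j = nth x0 s (lift i j).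
Proof.
move=> s_size; rewrite nth_cat size_take s_size ltn_ord /= /bump.
case: (ltnP j i) => [j_lt | i_le]; first by rewrite nth_take // leqNgt j_lt.
by rewrite nth_drop; congr nth; lia.
Qed.

Lemma coboundary_seq_nil c : coboundary_seq c [::] = 0.
Proof. by rewrite /coboundary_seq big_geq. Qed.

Lemma coboundary_seq_cons c x t :
  coboundary_seq c (x :: t) = c t - coboundary_seq (slice c x) t.
Proof.
rewrite /coboundary_seq /= big_nat_recl // expr0 scale1r /rem_nth /= drop0.
by rewrite -sumrN; congr (_ + _); apply: eq_bigr => i _; rewrite exprS mulN1r scaleNr.
Qed.

Lemma coboundary_seqB c1 c2 s :
  coboundary_seq (fun u => c1 u - c2 u) s = coboundary_seq c1 s - coboundary_seq c2 s.
Proof. by rewrite /coboundary_seq -sumrB; apply: eq_bigr => i _; rewrite scalerBr. Qed.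

Lemma cbounded_slice k K c x : cbounded k.+1 K c -> cbounded k K (slice c x).
Proof. by move=> c_K u u_size; apply: c_K; rewrite /= u_size. Qed.

Lemma coboundary_seq_norm_le c s K : (forall u, (size u).+1 = size s -> `|c u| <= K) ->
  `|coboundary_seq c s| <= (size s)%:R * K.
Proof.
move=> c_K; rewrite /coboundary_seq mulr_natl -[in leRHS](subn0 (size s)) -sumr_const_nat.
apply: (le_trans (ler_norm_sum _ _ _)); apply: ler_sum_nat => i /= i_lt.
rewrite normrZ normrX normrN1 expr1n mul1r c_K // size_rem_nth //.
by case: (size s) i_lt.
Qed.

Lemma cbounded_coboundary k K c : cbounded k K c ->
  cbounded k.+1 (k.+1%:R * K) (coboundary_seq c).
Proof.
move=> c_K s s_size; rewrite -s_size; apply: coboundary_seq_norm_le => u.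
by rewrite s_size => -[]; apply: c_K.
Qed.

Lemma rem_nth_mktuple n (g : 'I_n.+2 -> G) (i : 'I_n.+2) :
  rem_nth i (mktuple g) = mktuple (fun j : 'I_n.+1 => g (lift i j)).
Proof.
have rem_size : size (rem_nth i (mktuple g)) = n.+1 by rewrite size_rem_nth size_tuple.
apply: (@eq_from_nth _ (g ord0)); first by rewrite rem_size size_tuple.
move=> j; rewrite rem_size => j_lt; have -> : j = Ordinal j_lt by [].
by rewrite nth_rem_nth ?size_tuple // !nth_mktuple.
Qed.

Lemma coboundary_seq_nth x0 n (c : ('I_n.+1 -> G) -> E) u : size u = n.+2 ->
  coboundary_seq (fun s => c (fun i => nth x0 s i)) u = coboundary c (fun i => nth x0 u i).
Proof.
move=> u_size; rewrite /coboundary /coboundary_seq u_size big_mkord.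
by apply: eq_bigr => i _; congr (_ *: c _); apply/funext => j; rewrite nth_rem_nth.
Qed.

Lemma coboundary_mktuple n (b : seq G -> E) (g : 'I_n.+2 -> G) :
  coboundary (fun g' => b (mktuple g')) g = coboundary_seq b (mktuple g).
Proof.
rewrite /coboundary_seq size_tuple big_mkord.
by apply: eq_bigr => i _; rewrite rem_nth_mktuple.
Qed.

Lemma equivariant_nth (mul : G -> G -> G) (pi : G -> E -> E) (x0 : G) n
    (c : ('I_n -> G) -> E) (s : G) u : equivariant mul pi c -> size u = n ->
  c (fun i => nth x0 (map (mul s) u) i) = pi s (c (fun i => nth x0 u i)).
Proof.
by move=> c_eq u_size; rewrite -c_eq; congr c; apply/funext => i; rewrite (nth_map x0) ?u_size.
Qed.

End SeqCochains.

Section DualPairing.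
Variables (R : realType) (E F : normedModType R) (p : E -> F -> R).
Hypothesis p_dual : dual_pairing p.

Lemma dual_pairing_linl f : linear (p^~ f : E -> R^o).
Proof. by case: p_dual => _ p_lin _ _ _ a x y; apply: p_lin. Qed.

Lemma dual_pairing_linr x : linear (p x : F -> R^o).
Proof. by case: p_dual => p_lin _ _ _ _ a f g; apply: p_lin. Qed.

Lemma pairingDl x y f : p (x + y) f = p x f + p y f.
Proof. exact: (linear_mapD (dual_pairing_linl f) x y). Qed.

Lemma pairingZl a x f : p (a *: x) f = a * p x f.
Proof. exact: (linear_mapZ (dual_pairing_linl f) a x). Qed.

Lemma pairingNl x f : p (- x) f = - p x f.
Proof. exact: (linear_mapN (dual_pairing_linl f) x). Qed.

Lemma pairingBl x y f : p (x - y) f = p x f - p y f.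
Proof. exact: (linear_mapB (dual_pairing_linl f) x y). Qed.

Lemma pairing_le x f : `|p x f| <= `|x| * `|f|.
Proof. by case: p_dual. Qed.

Lemma pairing_norming x e : 0 < e -> exists f, `|f| <= 1 /\ `|x| - e < `|p x f|.
Proof. by case: p_dual => _ _ _ p_norming _; apply: p_norming. Qed.

Lemma pairing_inj x y : (forall f, p x f = p y f) -> x = y.
Proof.
move=> xy_eq; apply/eqP; rewrite -subr_eq0 -normr_le0 leNgt; apply/negP => xy_gt0.
have [f [_]] := pairing_norming (x - y) xy_gt0.
by rewrite subrr pairingBl xy_eq subrr normr0 ltxx.
Qed.

Section VectorMean.
Variables (G : Type) (mul : G -> G -> G) (H : set G) (m : (G -> R) -> R).
Hypothesis m_mean : invariant_mean mul H m.
Implicit Types (phi psi : G -> E).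

(* The weak-* integral of [phi] against [m]; [xget] returns the junk value 0 when
   no such vector exists. *)
Definition vmean phi : E := xget 0 [set x | forall f, p x f = m (fun g => p (phi g) f)].

Lemma bounded_on_pairing phi K f : (forall x, `|phi x| <= K) ->
  bounded_on H (fun g => p (phi g) f).
Proof.
by move=> phi_K; exists (K * `|f|) => x _; rewrite (le_trans (pairing_le _ _)) ?ler_wpM2r.
Qed.

Lemma vmeanE phi K : (forall x, `|phi x| <= K) ->
  forall f, p (vmean phi) f = m (fun g => p (phi g) f).
Proof.
move=> phi_K; apply: (xgetPex 0 (P := [set x | forall f, p x f = _])).
case: p_dual => _ _ _ _; apply.
  move=> a f f'; rewrite -(mean_linear m_mean _ (bounded_on_pairing f phi_K)
                                                   (bounded_on_pairing f' phi_K)).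
  by congr m; apply/funext => g; exact: dual_pairing_linr.
exists K => f; apply: (mean_norm_le m_mean) => [|x _]; first exact: bounded_on_pairing phi_K.
by rewrite (le_trans (pairing_le _ _)) ?ler_wpM2r.
Qed.

Lemma vmean_norm_le phi K : (forall x, `|phi x| <= K) -> `|vmean phi| <= K.
Proof.
move=> phi_K; rewrite leNgt; apply/negP; rewrite -subr_gt0.
move=> /(pairing_norming (vmean phi)) [f [f_le1]].
rewrite opprB addrC subrK (vmeanE phi_K) ltNge => /negP; apply.
apply: (mean_norm_le m_mean) => [|x _]; first exact: bounded_on_pairing phi_K.
have K_ge0 : 0 <= K := le_trans (normr_ge0 _) (phi_K x).
by rewrite (le_trans (pairing_le _ _)) // -[K]mulr1 ler_pM.
Qed.

Lemma vmean_cst v : vmean (fun _ => v) = v.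
Proof.
by apply: pairing_inj => f; rewrite (vmeanE (K := `|v|)) // (mean_cst m_mean).
Qed.

Lemma vmean_linear a phi psi K1 K2 : (forall x, `|phi x| <= K1) -> (forall x, `|psi x| <= K2) ->
  vmean (fun x => a *: phi x + psi x) = a *: vmean phi + vmean psi.
Proof.
move=> phi_K1 psi_K2; have lin_K x : `|a *: phi x + psi x| <= `|a| * K1 + K2.
  by rewrite (le_trans (ler_normD _ _)) // normrZ lerD ?ler_wpM2l.
apply: pairing_inj => f; rewrite (vmeanE lin_K) pairingDl pairingZl (vmeanE phi_K1) (vmeanE psi_K2).
rewrite -(mean_linear m_mean _ (bounded_on_pairing f phi_K1) (bounded_on_pairing f psi_K2)).
by congr m; apply/funext => g; rewrite pairingDl pairingZl.
Qed.

Lemma vmeanD phi psi K1 K2 : (forall x, `|phi x| <= K1) -> (forall x, `|psi x| <= K2) ->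
  vmean (fun x => phi x + psi x) = vmean phi + vmean psi.
Proof.
move=> phi_K1 psi_K2; rewrite -[vmean phi]scale1r -(vmean_linear _ phi_K1 psi_K2).
by congr vmean; apply/funext => x; rewrite scale1r.
Qed.

Lemma vmeanB phi psi K1 K2 : (forall x, `|phi x| <= K1) -> (forall x, `|psi x| <= K2) ->
  vmean (fun x => phi x - psi x) = vmean phi - vmean psi.
Proof.
move=> phi_K1 psi_K2; rewrite addrC -scaleN1r -(vmean_linear _ psi_K2 phi_K1).
by congr vmean; apply/funext => x; rewrite scaleN1r addrC.
Qed.

Lemma vmean_translate h phi K : H h -> (forall x, `|phi x| <= K) ->
  vmean (fun x => phi (mul h x)) = vmean phi.
Proof.
move=> Hh phi_K; apply: pairing_inj => f.
rewrite (vmeanE phi_K) (vmeanE (phi := fun x => phi (mul h x)) (K := K)) //.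
exact: (mean_translate m_mean) (bounded_on_pairing f phi_K).
Qed.

Lemma vmean_comp (T : E -> E) phi K : (forall x, `|T x| <= `|x|) ->
  (forall f, exists f', forall y, p (T y) f = p y f') ->
  (forall x, `|phi x| <= K) -> vmean (fun x => T (phi x)) = T (vmean phi).
Proof.
move=> T_contr T_preadj phi_K; apply: pairing_inj => f; have [f' T_f'] := T_preadj f.
have Tphi_K x : `|T (phi x)| <= K by rewrite (le_trans (T_contr _)).
rewrite (vmeanE Tphi_K) T_f' (vmeanE phi_K).
by congr m; apply/funext => g; rewrite T_f'.
Qed.

Section Homotopy.
Implicit Types (c : seq G -> E) (t u : seq G).

Fixpoint coset_mean t c : E :=
  if t is x :: t' then vmean (fun h => coset_mean t' (slice c (mul x h))) else c [::].

Fixpoint homotopy t c : E :=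
  if t is x :: t' then vmean (fun h => c (mul x h :: t) - homotopy t' (slice c (mul x h)))
  else 0.

Lemma coset_mean_norm_le t c K : cbounded (size t) K c -> `|coset_mean t c| <= K.
Proof.
elim: t c => [|x t IH] c c_K /=; first exact: c_K.
by apply: vmean_norm_le => h; apply/IH/cbounded_slice.
Qed.

Lemma homotopy_norm_le t c K : cbounded (size t).+1 K c -> `|homotopy t c| <= (size t)%:R * K.
Proof.
elim: t c => [|x t IH] c c_K /=; first by rewrite normr0 mul0r.
apply: vmean_norm_le => h; rewrite -nat1r mulrDl mul1r.
by rewrite (le_trans (ler_normB _ _)) ?lerD ?c_K ?IH //; apply: cbounded_slice.
Qed.

Lemma homotopy_eq0 t c : (forall u, size u = (size t).+1 -> c u = 0) -> homotopy t c = 0.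
Proof.
elim: t c => [|x t IH] c c0 //=.
rewrite -[RHS](vmean_cst 0); congr vmean; apply/funext => h.
by rewrite c0 // IH ?subr0 // => u u_size; rewrite /slice c0 //= u_size.
Qed.

Lemma homotopyB t c1 c2 K1 K2 : cbounded (size t).+1 K1 c1 -> cbounded (size t).+1 K2 c2 ->
  homotopy t (fun u => c1 u - c2 u) = homotopy t c1 - homotopy t c2.
Proof.
elim: t c1 c2 => [|x t IH] c1 c2 c1_K c2_K /=; first by rewrite subr0.
have hc_K c K : cbounded (size t).+2 K c -> forall y,
    `|c (mul x y :: x :: t) - homotopy t (slice c (mul x y))| <= K + (size t)%:R * K.
  move=> c_K y; rewrite (le_trans (ler_normB _ _)) ?lerD ?c_K ?homotopy_norm_le //.
  exact: cbounded_slice.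
rewrite -(vmeanB (hc_K _ _ c1_K) (hc_K _ _ c2_K)); congr vmean; apply/funext => h.
rewrite (IH (slice c1 _) (slice c2 _) (cbounded_slice _ c1_K) (cbounded_slice _ c2_K)).
by rewrite !opprD !opprK addrACA.
Qed.

Lemma coboundary_seq_vmean s (Phi : G -> seq G -> E) K :
  (forall h u, (size u).+1 = size s -> `|Phi h u| <= K) ->
  coboundary_seq (fun u => vmean (Phi^~ u)) s = vmean (fun h => coboundary_seq (Phi h) s).
Proof.
elim: s Phi => [|x s IH] Phi Phi_K.
  rewrite coboundary_seq_nil -[LHS](vmean_cst 0); congr vmean; apply/funext => h.
  by rewrite coboundary_seq_nil.
rewrite coboundary_seq_cons (IH (fun h u => Phi h (x :: u))) => [|h u u_size]; last first.
  by apply: Phi_K; rewrite /= u_size.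
have Phi_s_K h : `|Phi h s| <= K by apply: Phi_K.
have cob_K h : `|coboundary_seq (fun u => Phi h (x :: u)) s| <= (size s)%:R * K.
  by apply: coboundary_seq_norm_le => u u_size; apply: Phi_K; rewrite /= u_size.
rewrite -(vmeanB Phi_s_K cob_K); congr vmean; apply/funext => h.
by rewrite coboundary_seq_cons.
Qed.

Lemma coboundary_homotopy_cons x t c K : cbounded (size t).+1 K c ->
  coboundary_seq (homotopy^~ c) (x :: t) = homotopy t c -
    vmean (fun h => coboundary_seq (slice (slice c (mul x h)) x) t -
                    coboundary_seq (homotopy^~ (slice c (mul x h))) t).
Proof.
move=> c_K; rewrite coboundary_seq_cons; congr (_ - _).
pose Phi h u := c (mul x h :: x :: u) - homotopy u (slice c (mul x h)).
have Phi_K h u : (size u).+1 = size t -> `|Phi h u| <= K + (size t).-1%:R * K.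
  move=> u_size; rewrite -u_size (le_trans (ler_normB _ _)) ?lerD ?c_K ?homotopy_norm_le //=.
    by rewrite u_size.
  by apply: cbounded_slice; rewrite u_size.
rewrite [slice _ x](_ : _ = fun u => vmean (Phi^~ u)) // (coboundary_seq_vmean Phi_K).
by congr vmean; apply/funext => h; rewrite coboundary_seqB.
Qed.

Lemma homotopy_formula_step x y t c K : cbounded (size t).+1 K c ->
  slice c y t - coset_mean t (slice c y) =
    coboundary_seq (homotopy^~ (slice c y)) t + homotopy t (coboundary_seq (slice c y)) ->
  coboundary_seq c (y :: x :: t) - homotopy t (slice (coboundary_seq c) y) =
    c (x :: t) - homotopy t c
    + (coboundary_seq (slice (slice c y) x) t - coboundary_seq (homotopy^~ (slice c y)) t)
    - coset_mean t (slice c y).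
Proof.
move=> c_K formula_y.
have -> : slice (coboundary_seq c) y = fun u => c u - coboundary_seq (slice c y) u.
  by apply/funext => u; rewrite /slice coboundary_seq_cons.
rewrite (homotopyB c_K (cbounded_coboundary (cbounded_slice y c_K))) !coboundary_seq_cons.
(* Test this identity of the Z-module [E] against each [p _ f], where [lra] applies. *)
apply: pairing_inj => f; move: formula_y => /(congr1 (p^~ f)) /=.
rewrite !(pairingDl, pairingNl); lra.
Qed.

Lemma homotopy_formula t c K : cbounded (size t) K c ->
  c t - coset_mean t c = coboundary_seq (homotopy^~ c) t + homotopy t (coboundary_seq c).
Proof.
elim: t c K => [|x t IH] c K c_K; first by rewrite /= subrr coboundary_seq_nil addr0.
pose D h := coboundary_seq (slice (slice c (mul x h)) x) t -
             coboundary_seq (homotopy^~ (slice c (mul x h))) t.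
have step h : coboundary_seq c (mul x h :: x :: t) - homotopy t (slice (coboundary_seq c) (mul x h))
    = c (x :: t) - homotopy t c + D h - coset_mean t (slice c (mul x h)).
  exact: homotopy_formula_step c_K (IH _ _ (cbounded_slice _ c_K)).
rewrite (coboundary_homotopy_cons _ c_K) -/D /= (funext step).
have D_K h : `|D h| <= (size t)%:R * K + (size t)%:R * ((size t).-1%:R * K).
  rewrite (le_trans (ler_normB _ _)) // lerD // coboundary_seq_norm_le // => u u_size.
    by apply: c_K; rewrite /= u_size.
  by rewrite -u_size homotopy_norm_le //= u_size; apply: cbounded_slice.
have Q_K h : `|coset_mean t (slice c (mul x h))| <= K.
  by apply: coset_mean_norm_le; apply: cbounded_slice.
set a := c (x :: t) - homotopy t c.
have aD_K h : `|a + D h| <= `|a| + ((size t)%:R * K + (size t)%:R * ((size t).-1%:R * K)).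
  by rewrite (le_trans (ler_normD _ _)) ?lerD.
rewrite (vmeanB aD_K Q_K) (vmeanD (K1 := `|a|) _ D_K) // vmean_cst.
apply: pairing_inj => f; rewrite !(pairingDl, pairingNl); lra.
Qed.

End Homotopy.

Section Equivariance.
Variables (pi : G -> E -> E) (inv : G -> G) (one : G).
Hypothesis pi_linear : forall s, linear (pi s).
Hypothesis pi_isometry : forall s x, `|pi s x| = `|x|.
Hypothesis pi_wstar : wstar_continuous_rep p pi.
Hypothesis G_group : is_group mul inv one.
Implicit Types (c : seq G -> E) (t u : seq G).

Let mulA : associative mul. Proof. by case: G_group. Qed.

Let vmean_pi s phi K : (forall x, `|phi x| <= K) ->
  vmean (fun x => pi s (phi x)) = pi s (vmean phi).
Proof.
move=> phi_K; apply: (vmean_comp _ _ phi_K) => [x | f]; first by rewrite pi_isometry.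
exact: (wstar_continuous_preadjoint dual_pairing_linl dual_pairing_linr
  (pi_linear s) (@pi_wstar s) f).
Qed.

Lemma coset_mean_equivariant t c c' s K : cbounded (size t) K c' ->
  (forall u, size u = size t -> c (map (mul s) u) = pi s (c' u)) ->
  coset_mean (map (mul s) t) c = pi s (coset_mean t c').
Proof.
elim: t c c' => [|x t IH] c c' c'_K c_c' /=; first exact: (c_c' [::]).
rewrite -(vmean_pi s (K := K)) => [|h]; last exact/coset_mean_norm_le/cbounded_slice.
congr vmean; apply/funext => h; rewrite -mulA.
by apply: IH => [|u u_size]; [apply: cbounded_slice | apply: (c_c' (_ :: u)); rewrite /= u_size].
Qed.

Lemma homotopy_equivariant t c c' s K : cbounded (size t).+1 K c' ->
  (forall u, size u = (size t).+1 -> c (map (mul s) u) = pi s (c' u)) ->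
  homotopy (map (mul s) t) c = pi s (homotopy t c').
Proof.
elim: t c c' => [|x t IH] c c' c'_K c_c' /=; first by rewrite (linear_map0 (pi_linear s)).
rewrite -(vmean_pi s (K := K + (size t)%:R * K)) => [|h]; last first.
  by rewrite (le_trans (ler_normB _ _)) ?lerD ?c'_K ?homotopy_norm_le //; apply: cbounded_slice.
congr vmean; apply/funext => h; rewrite -mulA (linear_mapB (pi_linear s)).
rewrite -(c_c' (_ :: _ :: _)) //; congr (_ - _).
by apply: IH => [|u u_size]; [apply: cbounded_slice | apply: (c_c' (_ :: u)); rewrite /= u_size].
Qed.

Lemma coset_mean_translate t c (k : G -> G) K : cbounded (size t) K c ->
  (forall i, (i < size t)%N -> H (k (nth one t i))) ->
  coset_mean (map (fun x => mul x (k x)) t) c = coset_mean t c.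
Proof.
elim: t c => [|x t IH] c c_K k_H //=.
pose phi y := coset_mean t (slice c (mul x y)).
have phi_K y : `|phi y| <= K by exact/coset_mean_norm_le/cbounded_slice.
rewrite -(vmean_translate (k_H 0%N isT) phi_K); congr vmean; apply/funext => h.
rewrite /phi /= mulA (IH _ (cbounded_slice _ c_K)) // => i i_lt.
exact: (k_H i.+1).
Qed.

Hypothesis H_normalish : normalish mul inv H.
Hypothesis pi_mixing : mixing pi.

Lemma coset_mean_eq0 n t c K : size t = n.+1 -> cbounded n.+1 K c ->
  (forall s u, size u = n.+1 -> c (map (mul s) u) = pi s (c u)) -> coset_mean t c = 0.
Proof.
move=> t_size c_K c_eq; apply: contrapT => /eqP mean_neq0.
apply: (@H_normalish n (fun i => nth one t i)); apply: sub_finite_set (pi_mixing mean_neq0).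
move=> s /= s_conj; have [_ mul1g _ _ mulgV] := G_group.
rewrite -(coset_mean_equivariant (c := c) (K := K)) ?t_size // => [|u u_size]; last first.
  by apply: c_eq; rewrite u_size.
(* [s] moves each [t_i] inside its coset [t_i H], which the average does not see. *)
have -> : map (mul s) t = map (fun x => mul x (mul (mul (inv x) s) x)) t.
  by apply: eq_map => x; rewrite !mulA mulgV mul1g.
apply: (coset_mean_translate (K := K)) => [|i]; first by rewrite t_size.
by rewrite t_size => i_lt; apply: (s_conj (Ordinal i_lt)).
Qed.

Lemma cocycle_eq_coboundary_seq n t c K : size t = n.+1 -> cbounded n.+1 K c ->
  (forall s u, size u = n.+1 -> c (map (mul s) u) = pi s (c u)) ->
  (forall u, size u = n.+2 -> coboundary_seq c u = 0) ->
  c t = coboundary_seq (homotopy^~ c) t.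
Proof.
move=> t_size c_K c_eq c_cocycle.
have := homotopy_formula (t := t) (c := c) (K := K); rewrite t_size => /(_ c_K).
rewrite (coset_mean_eq0 t_size c_K c_eq) subr0 homotopy_eq0 ?addr0 // => u.
by rewrite t_size; apply: c_cocycle.
Qed.

Lemma cocycle_eq_coboundary_mktuple n (c : ('I_n.+1 -> G) -> E) K :
  (forall g, `|c g| <= K) -> equivariant mul pi c -> coboundary c = (fun _ => 0) ->
  forall g, c g = coboundary_seq (homotopy^~ (fun s => c (fun i => nth one s i))) (mktuple g).
Proof.
move=> c_K c_eq c_cocycle g; pose C s := c (fun i => nth one s i).
have -> : c g = C (mktuple g) by congr c; apply/funext => i; rewrite nth_mktuple.
apply: (cocycle_eq_coboundary_seq (K := K)) => [|u _ | s u u_size | u u_size].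
- exact: size_tuple.
- exact: c_K.
- exact: equivariant_nth c_eq u_size.
- by rewrite coboundary_seq_nth // c_cocycle.
Qed.

Lemma Hb_trivial_of_invariant_mean n : Hb_trivial mul pi n.
Proof.
move=> c [K c_K] c_eq c_cocycle.
have c_cob := cocycle_eq_coboundary_mktuple c_K c_eq c_cocycle.
case: n => [|n] in c c_K c_eq c_cocycle c_cob *.
all: set C := fun s => c (fun i => nth one s i) in c_cob.
  apply/funext => g; rewrite c_cob; apply/eqP; rewrite -normr_le0.
  rewrite (le_trans (coboundary_seq_norm_le (K := 0) _)) ?mulr0 // size_tuple.
  by case=> [|x u] //=; rewrite normr0.
have C_K : cbounded n.+2 K C by move=> u _; apply: c_K.
exists (fun g => homotopy (mktuple g) C); split.
- exists (n.+1%:R * K) => g.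
  by have := homotopy_norm_le (t := mktuple g) (c := C) (K := K); rewrite size_tuple; apply.
- move=> s g; have -> : val [tuple mul s (g i) | i < n.+1] = map (mul s) (mktuple g).
    by rewrite /= -map_comp.
  apply: (homotopy_equivariant (K := K)); first by rewrite size_tuple.
  by move=> u u_size; apply: equivariant_nth c_eq _; rewrite u_size size_tuple.
- by apply/funext => g; rewrite (coboundary_mktuple (homotopy^~ C)) c_cob.
Qed.

End Equivariance.
End VectorMean.
End DualPairing.

Theorem proposition3p2 (R : realType) (G : Type) (mul : G -> G -> G) (inv : G -> G)
  (one : G) (HG : is_group mul inv one)
  (Hex : exists H : set G, [/\ is_subgroup mul inv one H,
                              amenable_subgroup R mul H & normalish mul inv H]) :
  forall (E : completeNormedModType R) (F : completeNormedModType R)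
         (p : E -> F -> R) (pi : G -> E -> E),
    coefficient_module mul one p pi -> mixing pi ->
    forall n : nat, Hb_trivial mul pi n.
Proof.
move=> E F p pi [_ [p_dual [pi_wstar [pi_linear [pi_isometry _]]]]] pi_mixing n.
have [H [_ [m m_mean] H_normalish]] := Hex.
exact: (Hb_trivial_of_invariant_mean p_dual m_mean pi_linear pi_isometry pi_wstar HG
          H_normalish pi_mixing).
Qed.
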